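(* Let $q$ be a power of a prime with $q>2$. Then there is a right conjugacy closed loop of order $q^2-1$ whose right multiplication group is isomorphic to $\mathrm{GL}(2,q)$.
   Context: For a finite loop $\mathcal{L}$ the right multiplication group is the permutation group generated by the maps $R_a\colon x\mapsto xa$, $a\in\mathcal{L}$. The loop is right conjugacy closed if $\{R_a\mid a\in\mathcal{L}\}$ is closed under conjugation by its own elements. *)

From HB Require Import structures.
From mathcomp Require Import all_boot all_order all_algebra all_fingroup all_field.
Set Implicit Arguments. Unset Strict Implicit. Unset Printing Implicit Defensive.

Definition is_loop (T : finType) (mul : T -> T -> T) (e : T) : Prop :=
  (forall x, mul e x = x) /\ (forall x, mul x e = x) /\
  (forall a, injective (mul a)) /\ (forall a, injective (fun x => mul x a)).

Definition rmult_set (T : finType) (mul : T -> T -> T) : {set {perm T}} :=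
  [set s : {perm T} | [exists a : T, [forall x : T, s x == mul x a]]].

Definition rmult_group (T : finType) (mul : T -> T -> T) : {group {perm T}} :=
  <<rmult_set mul>>%G.

Definition rcc (T : finType) (mul : T -> T -> T) : Prop :=
  forall s t, s \in rmult_set mul -> t \in rmult_set mul ->
    (s ^ t)%g \in rmult_set mul.

From HB Require Import structures.
From mathcomp Require Import all_boot all_order all_algebra all_fingroup all_field.
From mathcomp Require Import all_solvable ring.
Set Implicit Arguments. Unset Strict Implicit. Unset Printing Implicit Defensive.
Import GRing.Theory.

(* Let F = GF(q) and let x^2 - beta x + gamma be rootless over F, with gamma
   a generator of F^*.  The set S of scalar matrices together with the matrices
   of trace beta and determinant gamma is invariant under conjugation, and each
   nonzero row vector is the first row of exactly one element of S, so S is a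
   sharply transitive set of permutations of the q^2 - 1 nonzero rows.  Such a
   set is the set of right translations of a loop (x * a = x s_a, where s_a is
   the element of S taking (1, 0) to a); conjugation invariance of S is right
   conjugacy closure, and the right multiplication group is <S>, acting
   faithfully.  Finally <S> is a normal subgroup of GL(2, q) containing a
   transvection when q > 2, hence containing SL(2, q), and its determinants
   include gamma, so <S> = GL(2, q). *)

Section ConjugationInvariantTransversal.
Local Open Scope group_scope.
Variables (gT : finGroupType) (T : finType) (to : {action gT &-> T}).
Variables (S : {set gT}) (e : T).
Hypothesis S1 : 1 \in S.
Hypothesis S_conj : forall s g, s \in S -> s ^ g \in S.
Hypothesis S_trans : forall x, exists2 s, s \in S & to e s = x.
Hypothesis S_regular : {in S &, forall s t, to e s = to e t -> s = t}.

Lemma transversal_sharp x : {in S &, forall s t, to x s = to x t -> s = t}.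
Proof.
move=> s t Ss St; have [g _ <-] := S_trans x.
have gE u : to (to e g) u = to (to e (u ^ g^-1)) g.
  by rewrite -!actM conjgE invgK mulgA mulgKV.
rewrite !gE => /act_inj/S_regular.
by move=> /(_ (S_conj _ Ss) (S_conj _ St)); apply: conjg_inj.
Qed.

Definition transversal_elt (x : T) : gT := odflt 1 [pick s in S | to e s == x].

Lemma transversal_eltP x : transversal_elt x \in S /\ to e (transversal_elt x) = x.
Proof.
rewrite /transversal_elt; case: pickP => [s /andP[Ss /eqP //] | none].
by have [s Ss exs] := S_trans x; have := none s; rewrite Ss exs eqxx.
Qed.

Lemma transversal_eltE s : s \in S -> transversal_elt (to e s) = s.
Proof. by move=> Ss; have [St /S_regular] := transversal_eltP (to e s); apply. Qed.

Definition transversal_mul (x y : T) : T := to x (transversal_elt y).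

Lemma transversal_loop : is_loop transversal_mul e.
Proof.
rewrite /transversal_mul; split; [|split; [|split]] => [x | x | x y z | a].
- by case: (transversal_eltP x).
- by rewrite -(act1 to e) transversal_eltE // act1.
- have [Sy ey] := transversal_eltP y; have [Sz ez] := transversal_eltP z.
  by move/(transversal_sharp Sy Sz) => yz; rewrite -ey -ez yz.
- exact: act_inj.
Qed.

Lemma rmult_set_transversal : rmult_set transversal_mul = actperm to @: S.
Proof.
apply/setP => p; rewrite inE.
apply/existsP/imsetP => [[y /forallP pE] | [s Ss ->]].
  exists (transversal_elt y); first by case: (transversal_eltP y).
  by apply/permP => x; rewrite actpermE (eqP (pE x)).
exists (to e s); apply/forallP => x.
by rewrite actpermE /transversal_mul transversal_eltE.
Qed.

Lemma transversal_rcc : rcc transversal_mul.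
Proof.
move=> p r; rewrite rmult_set_transversal => /imsetP[s Ss ->] /imsetP[t St ->].
by rewrite -morphJ ?inE // imset_f // S_conj.
Qed.

Lemma rmult_group_transversal :
  'injm (actperm to) -> rmult_group transversal_mul \isog <<S>>.
Proof.
move=> inj_to; rewrite isog_sym /rmult_group /= rmult_set_transversal.
rewrite -morphimEsub ?subsetT // -morphim_gen ?subsetT //.
exact: sub_isog (subsetT _) inj_to.
Qed.

End ConjugationInvariantTransversal.


Lemma exists_neq2 (T : finType) (a b : T) :
  2 < #|T| -> exists t, (t != a) && (t != b).
Proof.
rewrite -(cardC (pred2 a b)) card2 => T_gt2.
have /card_gt0P[t] : 0 < #|[predC pred2 a b]| by case: (a != b) T_gt2; case: #|_|.
by rewrite !inE negb_or; exists t.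
Qed.

Lemma unitmx_GL (F : finFieldType) n (A : 'M[F]_n.+1) :
  A \in unitmx -> exists g : {'GL_n.+1[F]}, GLval g = A.
Proof. by move=> uA; exists (insubd (1%g : {'GL_n.+1[F]}) A); rewrite insubdK. Qed.

Section NonzeroRowAction.
Local Open Scope ring_scope.
Variables (F : finFieldType) (n : nat).

Definition nzrow := {v : 'rV[F]_n.+1 | v != 0}.

Lemma mulmx_neq0 (v : 'rV[F]_n.+1) A : v != 0 -> A \in unitmx -> v *m A != 0.
Proof.
by move=> v0 uA; apply: contra v0 => /eqP vA0; rewrite -(mulmxK uA v) vA0 mul0mx.
Qed.

Definition nzrow_act (x : nzrow) (g : {'GL_n.+1[F]}) : nzrow :=
  insubd x (val x *m GLval g).

Lemma val_nzrow_act x g : val (nzrow_act x g) = val x *m GLval g.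
Proof. by rewrite insubdK //; apply: mulmx_neq0 (valP x) (GL_unitmx g). Qed.

Lemma nzrow_act1 : nzrow_act^~ 1%g =1 id.
Proof. by move=> x; apply: val_inj; rewrite val_nzrow_act mulmx1. Qed.

Lemma nzrow_actM x : act_morph nzrow_act x.
Proof. by move=> g h; apply: val_inj; rewrite !val_nzrow_act mulmxA. Qed.

Definition nzrow_action := TotalAction nzrow_act1 nzrow_actM.

Lemma card_nzrow : #|{: nzrow}| = (#|F| ^ n.+1 - 1)%N.
Proof.
rewrite card_sig subn1; have := cardC1 (0 : 'rV[F]_n.+1).
by rewrite card_mx mul1n => <-; apply: eq_card => v; rewrite !inE.
Qed.

Lemma eq_mulmx_nzrow (A B : 'M[F]_n.+1) :
  (forall v : 'rV_n.+1, v != 0 -> v *m A = v *m B) -> A = B.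
Proof.
move=> AB; apply/row_matrixP => i; rewrite !rowE; apply: AB.
by apply/eqP => /matrixP/(_ 0 i); rewrite !mxE !eqxx; apply/eqP; rewrite oner_eq0.
Qed.

Lemma nzrow_action_injm : ('injm (actperm nzrow_action))%g.
Proof.
apply/injmP => g h _ _ /permP gh; apply/val_inj/eq_mulmx_nzrow => v v0.
by have := gh (exist _ v v0); rewrite !actpermE => /(congr1 val); rewrite !val_nzrow_act.
Qed.

End NonzeroRowAction.

Section Matrix2.
Local Open Scope ring_scope.
Variable R : comNzRingType.

Definition mx2 (a b c d : R) : 'M[R]_2 :=
  \matrix_(i, j) if i == ord0 then (if j == ord0 then a else b)
                 else (if j == ord0 then c else d).

Definition row2 (x y : R) : 'rV[R]_2 := \row_j if j == ord0 then x else y.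

Lemma ord2_cases (i : 'I_2) : i = ord0 \/ i = ord_max.
Proof. by case: i => [[|[|//]]] ?; [left | right]; apply: val_inj. Qed.

Lemma big_ord2 (f : 'I_2 -> R) : \sum_(i < 2) f i = f ord0 + f ord_max.
Proof. by rewrite big_ord_recl big_ord1; congr (_ + f _); apply: val_inj. Qed.

Lemma mx2E (A : 'M[R]_2) :
  A = mx2 (A ord0 ord0) (A ord0 ord_max) (A ord_max ord0) (A ord_max ord_max).
Proof.
apply/matrixP => i j; rewrite mxE.
by case: (ord2_cases i) => ->; case: (ord2_cases j) => ->.
Qed.

Lemma row2E (v : 'rV[R]_2) : v = row2 (v ord0 ord0) (v ord0 ord_max).
Proof. by apply/rowP => j; rewrite mxE; case: (ord2_cases j) => ->. Qed.

Lemma row2_eq0 x y : (row2 x y == 0) = (x == 0) && (y == 0).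
Proof.
apply/eqP/andP => [/rowP xy0 | [/eqP-> /eqP->]].
  by have := xy0 ord0; have := xy0 ord_max; rewrite !mxE /= => -> ->.
by apply/rowP => j; rewrite !mxE; case: ifP.
Qed.

Lemma mul_mx2 a b c d a' b' c' d' :
  mx2 a b c d *m mx2 a' b' c' d' =
  mx2 (a * a' + b * c') (a * b' + b * d') (c * a' + d * c') (c * b' + d * d').
Proof.
apply/matrixP => i j; rewrite !mxE big_ord2 !mxE.
by case: (ord2_cases i) => ->; case: (ord2_cases j) => ->.
Qed.

Lemma mul_row2_mx2 x y a b c d :
  row2 x y *m mx2 a b c d = row2 (x * a + y * c) (x * b + y * d).
Proof. by apply/rowP => j; rewrite !mxE big_ord2 !mxE; case: (ord2_cases j) => ->. Qed.

Lemma det_mx2 a b c d : \det (mx2 a b c d) = a * d - b * c.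
Proof.
rewrite (expand_det_row _ ord0) big_ord2 /cofactor !det_mx11 !mxE /=.
by rewrite expr0 expr1; ring.
Qed.

Lemma mxtrace_mx2 a b c d : \tr (mx2 a b c d) = a + d.
Proof. by rewrite /mxtrace big_ord2 !mxE. Qed.

Lemma scalar_mx2 a : a%:M = mx2 a 0 0 a.
Proof.
apply/matrixP => i j; rewrite !mxE.
by case: (ord2_cases i) => ->; case: (ord2_cases j) => ->.
Qed.

End Matrix2.

Section Transversal2.
Local Open Scope ring_scope.
Variables (F : fieldType) (beta gamma : F).
Hypothesis no_root : forall x : F, x ^+ 2 - beta * x + gamma != 0.

Lemma gamma_neq0 : gamma != 0.
Proof. by have := no_root 0; rewrite expr0n mulr0 !sub0r oppr0 add0r. Qed.

Definition Smx (A : 'M[F]_2) : bool :=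
  is_scalar_mx A || (\tr A == beta) && (\det A == gamma).

Definition Smx_of (x y : F) : 'M[F]_2 :=
  if y == 0 then x%:M else mx2 x y ((x * (beta - x) - gamma) / y) (beta - x).

Lemma Smx_of_Smx x y : Smx (Smx_of x y).
Proof.
rewrite /Smx /Smx_of; case: eqP => [_ | /eqP y0]; first by rewrite scalar_mx_is_scalar.
rewrite mxtrace_mx2 det_mx2; apply/orP; right.
by apply/andP; split; apply/eqP; field.
Qed.

Lemma row_Smx_of x y : row2 1 0 *m Smx_of x y = row2 x y.
Proof.
rewrite /Smx_of; case: eqP => [-> | _];
  by rewrite ?scalar_mx2 mul_row2_mx2; congr row2; ring.
Qed.

Lemma Smx_of_unitmx x y : row2 x y != 0 -> Smx_of x y \in unitmx.
Proof.
rewrite row2_eq0 negb_and unitmxE unitfE /Smx_of.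
have [_ | y0 _] := eqVneq y 0; first by rewrite orbF det_scalar; apply: expf_neq0.
by rewrite det_mx2 [_ - _](_ : _ = gamma) ?gamma_neq0 //; field.
Qed.

(* Since x^2 - beta x + gamma has no root, a non-scalar element of S has a
   nonzero (0, 1) entry, and then its first row determines it. *)
Lemma Smx_mx2E a b c d : Smx (mx2 a b c d) -> mx2 a b c d = Smx_of a b.
Proof.
case/orP => [/is_scalar_mxP[l] | /andP[]]; rewrite ?mxtrace_mx2 ?det_mx2.
  rewrite scalar_mx2 => /matrixP lE; have := lE ord0 ord0; have := lE ord0 ord_max.
  have := lE ord_max ord0; have := lE ord_max ord_max; rewrite !mxE /=.
  by move=> -> -> -> ->; rewrite /Smx_of eqxx scalar_mx2.
move=> /eqP tr /eqP dt; rewrite /Smx_of; case: eqP => [b0 | /eqP b0].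
  by have := no_root a; rewrite -dt -tr b0 => /eqP[]; ring.
by congr mx2; rewrite -tr; [rewrite -dt; field | ring].
Qed.

Lemma Smx_regular A B : Smx A -> Smx B -> row2 1 0 *m A = row2 1 0 *m B -> A = B.
Proof.
rewrite (mx2E A) (mx2E B) !mul_row2_mx2 => /Smx_mx2E-> /Smx_mx2E->.
move=> /rowP AB; have := AB ord0; have := AB ord_max; rewrite !mxE /=.
by rewrite !mul1r !mul0r !addr0 => -> ->.
Qed.

Lemma Smx_conj A P : P \in unitmx -> Smx A -> Smx (invmx P *m A *m P).
Proof.
move=> uP /orP[/is_scalar_mxP[l ->] | /andP[/eqP tr /eqP dt]].
  rewrite mul_mx_scalar -scalemxAl mulVmx // scale_scalar_mx mulr1.
  by rewrite /Smx scalar_mx_is_scalar.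
have detP : \det P != 0 by rewrite -unitfE -unitmxE.
rewrite /Smx mxtrace_mulC mulmxA mulmxV // mul1mx tr !det_mulmx det_inv -dt.
by rewrite eqxx mulrC mulVKf ?eqxx ?orbT.
Qed.

End Transversal2.

Section Generation.
Local Open Scope ring_scope.
Variables (F : finFieldType) (beta gamma : F).
Hypothesis no_root : forall x : F, x ^+ 2 - beta * x + gamma != 0.
Hypothesis gamma_gen : forall z : F, z != 0 -> exists i, z = gamma ^+ i.
Hypothesis card_F : (2 < #|F|)%N.
Variable H : {group {'GL_2[F]}}.
Hypothesis SH : forall g : {'GL_2[F]}, Smx beta gamma (GLval g) -> g \in H.
Hypothesis H_conj : forall g h : {'GL_2[F]}, h \in H -> (h ^ g)%g \in H.

Definition inH (A : 'M[F]_2) : Prop := exists2 g, g \in H & GLval g = A.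

Lemma inHM A B : inH A -> inH B -> inH (A *m B).
Proof. by move=> [g Hg <-] [h Hh <-]; exists (g * h)%g; rewrite ?groupM. Qed.

Lemma inHMr A B : inH B -> inH (A *m B) -> inH A.
Proof.
move=> [h Hh hB] [g Hg gAB]; exists (g * h^-1)%g; first by rewrite groupM ?groupV.
by rewrite GL_MxE GL_VxE gAB -hB mulmxK ?GL_unitmx.
Qed.

Lemma inH_conj P Q A : P *m Q = 1%:M -> inH A -> inH (P *m A *m Q).
Proof.
move=> PQ [g Hg <-]; have [_ uQ] := mulmx1_unit PQ.
have [q qQ] := unitmx_GL uQ; exists (g ^ q)%g; first exact: H_conj.
have PE : P = invmx Q by rewrite -(mulmxK uQ P) PQ mul1mx.
by rewrite PE -qQ -mulmxA.
Qed.

Lemma inH_Smx A : A \in unitmx -> Smx beta gamma A -> inH A.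
Proof. by move=> uA SA; have [g gA] := unitmx_GL uA; exists g; rewrite ?SH ?gA. Qed.

Lemma inH_char A : \tr A = beta -> \det A = gamma -> inH A.
Proof.
move=> trA detA; apply: inH_Smx; last by rewrite /Smx trA detA !eqxx orbT.
by rewrite unitmxE detA unitfE (gamma_neq0 no_root).
Qed.

Lemma gamma_neq1 : gamma != 1.
Proof.
apply/eqP => gamma1; have [t /andP[t0 t1]] := exists_neq2 (0 : F) 1 card_F.
by have [i] := gamma_gen t0; rewrite gamma1 expr1n => t1E; rewrite t1E eqxx in t1.
Qed.

Lemma exists_lower_coef : exists x, beta * (1 - gamma) + x * (gamma ^+ 2 - 1) != 0.
Proof.
have [k0 | k0] := eqVneq (beta * (1 - gamma)) 0; last by exists 0; rewrite mul0r addr0.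
have beta0 : beta = 0.
  move/eqP: k0; rewrite mulf_eq0 subr_eq0 [1 == _]eq_sym (negbTE gamma_neq1).
  by rewrite orbF => /eqP.
exists 1; rewrite k0 mul1r add0r subr_eq0 -(expr1n F 2) eqf_sqr (negbTE gamma_neq1) /=.
by apply: contraNneq (no_root 1) => ->; rewrite beta0 expr1n mul0r subr0 subrr.
Qed.

(* The cofactor M is (Smx_of x y)^-1 times the target matrix; the constraint
   on c is exactly the condition that M has trace beta. *)
Lemma inH_lower x y c :
  y != 0 -> y * c = beta * (1 - gamma) + x * (gamma ^+ 2 - 1) ->
  inH (mx2 1 0 c (gamma ^+ 2)).
Proof.
move=> y0 yc; have g0 := gamma_neq0 no_root.
pose M := mx2 ((beta - x - y * c) / gamma) (- y * gamma)
              ((x * c - (x * (beta - x) - gamma) / y) / gamma) (x * gamma).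
have -> : mx2 1 0 c (gamma ^+ 2) = Smx_of beta gamma x y *m M.
  by rewrite /Smx_of (negbTE y0) mul_mx2; congr mx2; field; rewrite ?g0 ?y0.
apply: inHM; first apply: inH_Smx (Smx_of_Smx _ _ _ _).
  by apply: (Smx_of_unitmx no_root); rewrite row2_eq0 negb_and y0 orbT.
apply: inH_char; rewrite /M ?mxtrace_mx2 ?det_mx2; last by field; rewrite ?g0 ?y0.
by rewrite yc; field; rewrite ?g0 ?y0.
Qed.

Lemma inH_transvection c : inH (mx2 1 0 c 1).
Proof.
have [x k0] := exists_lower_coef.
set k := _ + _ in k0.
have lower c' : c' != 0 -> inH (mx2 1 0 c' (gamma ^+ 2)).
  move=> c'0; apply: (@inH_lower x (k / c')); last by rewrite divfK.
  by rewrite mulf_neq0 ?invr_neq0.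
have [t /andP[t0 tc]] := exists_neq2 (0 : F) (- c) card_F.
apply: (@inHMr _ (mx2 1 0 t (gamma ^+ 2))); first exact: lower.
have -> : mx2 1 0 c 1 *m mx2 1 0 t (gamma ^+ 2) = mx2 1 0 (c + t) (gamma ^+ 2).
  by rewrite mul_mx2; congr mx2; ring.
by apply: lower; rewrite addrC addr_eq0.
Qed.

Lemma inH_upper c : inH (mx2 1 c 0 1).
Proof.
have J2 : mx2 0 1 1 0 *m mx2 0 1 1 0 = 1%:M :> 'M[F]_2.
  by rewrite mul_mx2 scalar_mx2; congr mx2; ring.
have -> : mx2 1 c 0 1 = mx2 0 1 1 0 *m mx2 1 0 c 1 *m mx2 0 1 1 0.
  by rewrite !mul_mx2; congr mx2; ring.
exact: inH_conj J2 (inH_transvection c).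
Qed.

Lemma inH_SL_offdiag a b c d : a * d - b * c = 1 -> b != 0 -> inH (mx2 a b c d).
Proof.
move=> det1 b0; have cE : c = (a * d - 1) / b by rewrite -det1; field.
have -> : mx2 a b c d = mx2 1 0 ((d - 1) / b) 1 *m mx2 1 b 0 1 *m mx2 1 0 ((a - 1) / b) 1.
  by rewrite !mul_mx2 cE; congr mx2; field.
exact: inHM (inHM (inH_transvection _) (inH_upper _)) (inH_transvection _).
Qed.

Lemma inH_SL_mx2 a b c d : a * d - b * c = 1 -> inH (mx2 a b c d).
Proof.
move=> det1; have [b0 | b0] := eqVneq b 0; last exact: inH_SL_offdiag.
have d0 : d != 0.
  move/eqP: det1; rewrite b0 mul0r subr0; apply: contraTneq => ->.
  by rewrite mulr0 eq_sym oner_eq0.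
have -> : mx2 a b c d = mx2 1 (-1) 0 1 *m mx2 (a + c) d c d.
  by rewrite mul_mx2 b0; congr mx2; ring.
apply: inHM (inH_upper _) (inH_SL_offdiag _ d0).
by rewrite -det1 b0; ring.
Qed.

Lemma inH_SL A : \det A = 1 -> inH A.
Proof. by rewrite [A]mx2E det_mx2; apply: inH_SL_mx2. Qed.

Lemma inH_det i : exists2 B, inH B & \det B = gamma ^+ i.
Proof.
elim: i => [|i [B HB detB]].
  by exists 1%:M; [exists 1%g; rewrite ?group1 | rewrite det1].
exists (mx2 0 1 (- gamma) beta *m B); last by rewrite det_mulmx det_mx2 detB exprS; ring.
by apply: inHM HB; apply: inH_char; rewrite ?mxtrace_mx2 ?det_mx2; ring.
Qed.

Lemma H_full : H :=: [set: {'GL_2[F]}].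
Proof.
apply/setP => g; rewrite inE.
have [i detg] := gamma_gen (GL_det g); have [B HB detB] := inH_det i.
have uB : B \in unitmx by case: HB => u _ <-; exact: (GL_unitmx u).
have [u Hu /val_inj <- //] : inH (GLval g).
rewrite -(mulmxKV uB (GLval g)); apply: inHM HB; apply: inH_SL.
by rewrite det_mulmx det_inv detB -detg mulfV ?(GL_det g).
Qed.

End Generation.

Section FiniteFieldChoices.
Local Open Scope ring_scope.
Variable F : finFieldType.

Lemma exists_unit_generator :
  exists2 gamma : F, gamma != 0 & forall z, z != 0 -> exists i, z = gamma ^+ i.
Proof.
have /cyclicP[u uE] := field_unit_group_cyclic [set: {unit F}]%G.
exists (val u) => [|z z0]; first by rewrite -unitfE (valP u).
have uz : z \is a GRing.unit by rewrite unitfE.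
have /cycleP[i ziE] : FinRing.unit F uz \in <[u]>%g by rewrite -uE inE.
by exists i; rewrite -FinRing.val_unitX -ziE.
Qed.

(* A root x of x^2 - beta x + gamma is nonzero and gives beta = x + gamma / x;
   the map x |-> x + gamma / x on F^* cannot reach all of F. *)
Lemma exists_rootless_quadratic (gamma : F) :
  gamma != 0 -> exists beta, forall x, x ^+ 2 - beta * x + gamma != 0.
Proof.
move=> g0; pose sums := [set x + gamma / x | x in [set~ (0 : F)]].
have /subsetPn[beta _ beta_sums] : ~~ ([set: F] \subset sums).
  apply/negP => /subset_leq_card; rewrite cardsT; apply/negP; rewrite -ltnNge.
  apply: leq_ltn_trans (leq_imset_card _ _) _; rewrite cardsC1 prednK //.
  by apply/card_gt0P; exists 0.
exists beta => x; apply: contra beta_sums => /eqP root.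
have x0 : x != 0.
  by apply: contra_eq_neq root => ->; rewrite expr0n mulr0 !sub0r oppr0 add0r.
apply/imsetP; exists x; first by rewrite !inE.
by apply: (mulIf x0); rewrite mulrDl divfK // -[RHS]subr0 -root; ring.
Qed.

End FiniteFieldChoices.

Section GL2Transversal.
Local Open Scope ring_scope.
Variables (F : finFieldType) (beta gamma : F).
Hypothesis no_root : forall x : F, x ^+ 2 - beta * x + gamma != 0.

Definition SGL : {set {'GL_2[F]}} := [set g : {'GL_2[F]} | Smx beta gamma (GLval g)].

Lemma row2_10_neq0 : row2 (1 : F) 0 != 0.
Proof. by rewrite row2_eq0 oner_eq0. Qed.

Definition e1 : nzrow F 1 := exist (fun v => v != 0) _ row2_10_neq0.

Lemma SGL1 : 1%g \in SGL.
Proof. by rewrite inE; apply/orP; left; apply: scalar_mx_is_scalar 1. Qed.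

Lemma SGL_conj s g : s \in SGL -> (s ^ g)%g \in SGL.
Proof.
rewrite !inE => Ss; have := Smx_conj (GL_unitmx g) Ss.
by congr (Smx _ _); rewrite -mulmxA.
Qed.

Lemma SGL_trans x : exists2 s, s \in SGL & nzrow_action F 1 e1 s = x.
Proof.
have x0 := valP x; rewrite [val x]row2E in x0.
have [s sE] := unitmx_GL (Smx_of_unitmx no_root x0).
exists s; first by rewrite inE sE Smx_of_Smx.
by apply: val_inj; rewrite /= val_nzrow_act sE row_Smx_of -row2E.
Qed.

Lemma SGL_regular :
  {in SGL &, forall s t, nzrow_action F 1 e1 s = nzrow_action F 1 e1 t -> s = t}.
Proof.
move=> s t; rewrite !inE => Ss St /(congr1 val) /=; rewrite !val_nzrow_act.
by move=> st; apply: val_inj; exact: (Smx_regular no_root Ss St st).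
Qed.

Lemma conjs_SGL g : (SGL :^ g)%g = SGL.
Proof.
apply/eqP; rewrite eqEcard cardJg leqnn andbT.
by apply/subsetP => _ /imsetP[s Ss ->]; apply: SGL_conj.
Qed.

Lemma gen_SGL :
  (forall z : F, z != 0 -> exists i, z = gamma ^+ i) -> (2 < #|F|)%N ->
  <<SGL>>%g = [set: {'GL_2[F]}].
Proof.
move=> gamma_gen card_F; apply: (H_full no_root gamma_gen card_F).
  by move=> g Sg; apply: mem_gen; rewrite inE.
by move=> g h; rewrite -(memJ_conjg _ g) -genJ conjs_SGL.
Qed.

End GL2Transversal.

Theorem proposition7p1 (p k : nat) :
  prime p -> 0 < k -> 2 < p ^ k ->
  exists F : finFieldType, #|F| = p ^ k /\
  exists (T : finType) (mul : T -> T -> T) (e : T),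
    [/\ is_loop mul e, #|T| = (p ^ k) ^ 2 - 1, rcc mul &
        (rmult_group mul \isog [set: {'GL_2[F]}])%g].
Proof.
move=> p_pr k_gt0 q_gt2; have [F _ cardF] := pPrimePowerField p_pr k_gt0.
exists F; split=> //.
have [gamma gamma0 gamma_gen] := exists_unit_generator F.
have [beta no_root] := exists_rootless_quadratic gamma0.
have S_conj := @SGL_conj F beta gamma.
have S_trans := SGL_trans no_root; have S_reg := SGL_regular no_root.
exists (nzrow F 1), (transversal_mul (nzrow_action F 1) (SGL beta gamma) (e1 F)), (e1 F).
split.
- exact: transversal_loop (SGL1 _ _) S_conj S_trans S_reg.
- by rewrite card_nzrow cardF.
- exact: transversal_rcc S_conj S_trans S_reg.
- rewrite -(gen_SGL no_root gamma_gen) ?cardF //.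
  exact: rmult_group_transversal S_reg (nzrow_action_injm F 1).
Qed.
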